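(* Let $s=(x_0,x_1,\dots,x_d,y)$ be a sample with features $x=(x_0,\dots,x_d)\in\mathbb{R}^{d+1}$ and label $y\in\{0,1\}$, and let $\lambda=(\lambda_1,\dots,\lambda_d)\in[0,1)^d$ with RIM augmentation $s_\lambda=(x_{0,\lambda_0},\dots,x_{d,\lambda_d},y)$. Let $f_\theta$ be a neural network with ReLU activations and sigmoid output, $f_\theta(x)=\sigma(g_\theta(x))$, where the last-layer pre-activation is $g_\theta(x)=\nabla g_\theta^T x+b$ with $\nabla g_\theta\in\mathbb{R}^{d+1}$ the gradient of $g_\theta$ with respect to the input. Let $l$ be the binary cross-entropy loss $l(s,\theta)=-\big(y\log f_\theta(x)+(1-y)\log(1-f_\theta(x))\big)$. Then $$\|l(s_\lambda,\theta)-l(s,\theta)\|\le\sqrt{d}\Big(\|A\|_F+\sum_{i=1}^d\|B_i\|_F\Big)\|\nabla g_\theta\|,$$ where $\|\cdot\|_F$ is the Frobenius norm, $\|\nabla g_\theta\|$ the Euclidean norm, and $A,B_1,\dots,B_d$ are the $(d+1)\times(d+1)$ matrices whose first row and first column are zero and whose lower-right $d\times d$ blocks have entry in row $j$, column $r$ ($1\le j,r\le d$) equal to $\frac{\partial x_{r,\lambda_r}}{\partial\lambda_j}\big|_{\lambda=\vec 0}$ for $A$ and $\frac{\partial^2 x_{r,\lambda_r}}{\partial\lambda_i\partial\lambda_j}\big|_{\lambda=\vec 0}$ for $B_i$ (these entries vanish for $r<j$).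
   Context: RIM augmentation: $x_{0,\lambda_0}=x_0$ and $x_{j,\lambda_j}=(1-\lambda_j)x_j+\lambda_j x_{j-1,\lambda_{j-1}}$ for $j=1,\dots,d$; the augmented sample keeps the label $y$. The matrix $A$ is interpreted as the ''velocity'' and the $B_i$ as the ''accelerations'' of the augmented features with respect to the interpolation coefficients. $\sigma(t)=1/(1+e^{-t})$. *)

From Stdlib Require Import Reals.
From Coquelicot Require Import Coquelicot.
Open Scope R_scope.

Fixpoint rsum1 (f : nat -> R) (n : nat) : R :=
  match n with
  | O => 0
  | S k => rsum1 f k + f (S k)
  end.

Definition rsum0 (f : nat -> R) (d : nat) : R := f O + rsum1 f d.

(* vectors of R^{d+1} are functions nat -> R, only indices 0..d matter *)
Definition dot (d : nat) (u v : nat -> R) : R := rsum0 (fun i => u i * v i) d.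
Definition euclid (d : nat) (u : nat -> R) : R := sqrt (rsum0 (fun i => (u i)^2) d).

(* (d+1)x(d+1) matrices as functions of (row, column) indices in 0..d *)
Definition frob (d : nat) (M : nat -> nat -> R) : R :=
  sqrt (rsum0 (fun j => rsum0 (fun r => (M j r)^2) d) d).

Definition sigma (t : R) : R := 1 / (1 + exp (- t)).
Definition bce (y t : R) : R :=
  - (y * ln (sigma t) + (1 - y) * ln (1 - sigma t)).

Definition loss (g : (nat -> R) -> R) (x : nat -> R) (y : R) : R := bce y (g x).

(* RIM augmentation: x_{0,lam_0} = x_0,
   x_{j,lam_j} = (1 - lam_j) x_j + lam_j x_{j-1,lam_{j-1}} *)
Fixpoint rim (x lam : nat -> R) (j : nat) : R :=
  match j with
  | O => x O
  | S k => (1 - lam (S k)) * x (S k) + lam (S k) * rim x lam k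
  end.

Definition upd (lam : nat -> R) (j : nat) (t : R) : nat -> R :=
  fun k => if Nat.eqb k j then t else lam k.

Definition zero_vec : nat -> R := fun _ => 0.

Definition dpartial (j : nat) (F : (nat -> R) -> R) (lam : nat -> R) : R :=
  Derive (fun t => F (upd lam j t)) (lam j).

Definition Amat (x : nat -> R) (j r : nat) : R :=
  match j, r with
  | O, _ | _, O => 0
  | _, _ => dpartial j (fun lam => rim x lam r) zero_vec
  end.

Definition Bmat (x : nat -> R) (i j r : nat) : R :=
  match j, r with
  | O, _ | _, O => 0
  | _, _ => dpartial i (dpartial j (fun lam => rim x lam r)) zero_vec
  end.

(* The cross-entropy with label 0 or 1 is the softplus [ln (1 + exp t)] of
   [t] or [- t], a 1-Lipschitz function, so the loss moves by at most
   [|w . (x_lam - x)|].  Each RIM step replaces the error [x_{r,lam} - x_r] by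
   [lam_r] times [(x_{r-1,lam} - x_{r-1}) + (x_{r-1} - x_r)], hence the error
   is bounded by the variation [sum_{k <= d} |x_{k-1} - x_k|] of the features,
   and Cauchy-Schwarz gives [sum_i |w_i| <= sqrt d |w|].  Finally every jump
   of the variation is a diagonal entry of one of the matrices:
   [A_{d,d} = x_{d-1} - x_d] and [(B_k)_{k+1,k+1} = x_{k-1} - x_k]. *)

From Pilot Require Import Defs.
From Stdlib Require Import Reals Lra Lia.
From Coquelicot Require Import Coquelicot.
Open Scope R_scope.

Lemma rsum1_le (f g : nat -> R) (n : nat) :
  (forall k, (1 <= k <= n)%nat -> f k <= g k) -> rsum1 f n <= rsum1 g n.
Proof.
  induction n as [|n IH]; intros Hfg; cbn [rsum1]; [lra|].
  assert (rsum1 f n <= rsum1 g n) by (apply IH; intros k Hk; apply Hfg; lia).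
  assert (f (S n) <= g (S n)) by (apply Hfg; lia).
  lra.
Qed.

Lemma rsum1_nonneg (f : nat -> R) (n : nat) :
  (forall k, 0 <= f k) -> 0 <= rsum1 f n.
Proof.
  intros Hf; induction n as [|n IH]; cbn [rsum1]; [lra|].
  pose proof (Hf (S n)); lra.
Qed.

Lemma rsum1_monotone (f : nat -> R) (m n : nat) :
  (forall k, 0 <= f k) -> (m <= n)%nat -> rsum1 f m <= rsum1 f n.
Proof.
  intros Hf Hmn; induction Hmn as [|n _ IH]; cbn [rsum1]; [lra|].
  pose proof (Hf (S n)); lra.
Qed.

Lemma rsum1_term_le (f : nat -> R) (n k : nat) :
  (forall k, 0 <= f k) -> (1 <= k <= n)%nat -> f k <= rsum1 f n.
Proof.
  intros Hf Hk; destruct k as [|k]; [lia|].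
  apply Rle_trans with (rsum1 f (S k)).
  - cbn [rsum1]; pose proof (rsum1_nonneg f k Hf); lra.
  - apply rsum1_monotone; [exact Hf | lia].
Qed.

Lemma rsum0_term_le (f : nat -> R) (n k : nat) :
  (forall k, 0 <= f k) -> (k <= n)%nat -> f k <= rsum0 f n.
Proof.
  intros Hf Hk; unfold rsum0; destruct k as [|k].
  - pose proof (rsum1_nonneg f n Hf); lra.
  - pose proof (rsum1_term_le f n (S k) Hf ltac:(lia)); pose proof (Hf O); lra.
Qed.

Lemma Rabs_rsum1_le (f : nat -> R) (n : nat) :
  Rabs (rsum1 f n) <= rsum1 (fun k => Rabs (f k)) n.
Proof.
  induction n as [|n IH]; cbn [rsum1].
  - rewrite Rabs_R0; lra.
  - pose proof (Rabs_triang (rsum1 f n) (f (S n))); lra.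
Qed.

Lemma rsum1_mult_r (f : nat -> R) (c : R) (n : nat) :
  rsum1 (fun k => f k * c) n = rsum1 f n * c.
Proof. induction n as [|n IH]; cbn [rsum1]; [ring | rewrite IH; ring]. Qed.

Lemma rsum1_minus (f g : nat -> R) (n : nat) :
  rsum1 f n - rsum1 g n = rsum1 (fun k => f k - g k) n.
Proof. induction n as [|n IH]; cbn [rsum1]; [ring | rewrite <- IH; ring]. Qed.

Lemma rsum1_cross_le (f : nat -> R) (c : R) (n : nat) :
  2 * c * rsum1 f n <= rsum1 (fun k => f k ^ 2) n + INR n * c ^ 2.
Proof.
  induction n as [|n IH]; cbn [rsum1]; [simpl; lra|].
  rewrite S_INR; pose proof (pow2_ge_0 (f (S n) - c)); nra.
Qed.

Lemma rsum1_Cauchy_Schwarz (f : nat -> R) (n : nat) :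
  rsum1 f n ^ 2 <= INR n * rsum1 (fun k => f k ^ 2) n.
Proof.
  induction n as [|n IH]; cbn [rsum1]; [simpl; lra|].
  rewrite S_INR; pose proof (rsum1_cross_le f (f (S n)) n); nra.
Qed.

Lemma rsum1_abs_le_euclid (w : nat -> R) (d : nat) :
  rsum1 (fun i => Rabs (w i)) d <= sqrt (INR d) * euclid d w.
Proof.
  unfold euclid; rewrite <- sqrt_mult_alt by apply pos_INR.
  rewrite <- (sqrt_pow2 (rsum1 _ d)) by (apply rsum1_nonneg; intros; apply Rabs_pos).
  apply sqrt_le_1_alt.
  eapply Rle_trans; [apply rsum1_Cauchy_Schwarz|].
  apply Rmult_le_compat_l; [apply pos_INR|].
  unfold rsum0; pose proof (pow2_ge_0 (w O)).
  assert (rsum1 (fun i => Rabs (w i) ^ 2) d <= rsum1 (fun i => w i ^ 2) d)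
    by (apply rsum1_le; intros; rewrite pow2_abs; lra).
  lra.
Qed.

Lemma Rabs_le_frob (d : nat) (M : nat -> nat -> R) (j r : nat) :
  (j <= d)%nat -> (r <= d)%nat -> Rabs (M j r) <= frob d M.
Proof.
  intros Hj Hr; unfold frob.
  rewrite <- (sqrt_pow2 (Rabs (M j r))) by apply Rabs_pos.
  rewrite pow2_abs; apply sqrt_le_1_alt.
  assert (Hrow : forall j', 0 <= rsum0 (fun r' => M j' r' ^ 2) d).
  { intros j'; apply Rle_trans with (M j' O ^ 2); [apply pow2_ge_0|].
    apply (rsum0_term_le (fun r' => M j' r' ^ 2)); [intros; apply pow2_ge_0 | lia]. }
  apply Rle_trans with (rsum0 (fun r' => M j r' ^ 2) d).
  - apply (rsum0_term_le (fun r' => M j r' ^ 2)); [intros; apply pow2_ge_0 | exact Hr].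
  - apply (rsum0_term_le (fun j' => rsum0 (fun r' => M j' r' ^ 2) d)); assumption.
Qed.

Definition softplus (t : R) : R := ln (1 + exp t).

Lemma softplus_increment (a b : R) :
  b <= a -> 0 <= softplus a - softplus b <= a - b.
Proof.
  intros Hab; unfold softplus.
  pose proof (exp_pos b) as Hb; pose proof (exp_pos (a - b)) as Hab'.
  assert (He : 1 <= exp (a - b)) by (pose proof (exp_ineq1_le (a - b)); lra).
  assert (Ha : exp a = exp (a - b) * exp b)
    by (rewrite <- exp_plus; f_equal; ring).
  rewrite Ha; split.
  - assert (ln (1 + exp b) <= ln (1 + exp (a - b) * exp b))
      by (apply ln_le; nra).
    lra.
  - assert (ln (1 + exp (a - b) * exp b) <= ln (exp (a - b) * (1 + exp b)))
      by (apply ln_le; nra).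
    rewrite ln_mult, ln_exp in H by lra.
    lra.
Qed.

Lemma softplus_lipschitz (a b : R) :
  Rabs (softplus a - softplus b) <= Rabs (a - b).
Proof.
  destruct (Rle_or_lt b a) as [Hba | Hab].
  - pose proof (softplus_increment a b Hba).
    rewrite !Rabs_pos_eq; lra.
  - pose proof (softplus_increment b a ltac:(lra)).
    rewrite (Rabs_minus_sym (softplus a)), (Rabs_minus_sym a), !Rabs_pos_eq; lra.
Qed.

Lemma bce_0 (t : R) : bce 0 t = softplus t.
Proof.
  unfold bce, Defs.sigma, softplus.
  pose proof (exp_pos t); pose proof (exp_pos (- t)).
  replace (1 - 1 / (1 + exp (- t))) with (/ (1 + exp t))
    by (rewrite exp_Ropp; field; lra).
  rewrite ln_Rinv by lra; ring.
Qed.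

Lemma bce_1 (t : R) : bce 1 t = softplus (- t).
Proof.
  unfold bce, Defs.sigma, softplus.
  pose proof (exp_pos (- t)).
  replace (1 / (1 + exp (- t))) with (/ (1 + exp (- t))) by (field; lra).
  rewrite ln_Rinv by lra; ring.
Qed.

Lemma bce_lipschitz (y a b : R) :
  y = 0 \/ y = 1 -> Rabs (bce y a - bce y b) <= Rabs (a - b).
Proof.
  intros [-> | ->].
  - rewrite !bce_0; apply softplus_lipschitz.
  - rewrite !bce_1, (Rabs_minus_sym a).
    replace (b - a) with (- a - - b) by ring.
    apply softplus_lipschitz.
Qed.

Lemma rim_upd_lt (x lam : nat -> R) (j k : nat) (t : R) :
  (k < j)%nat -> rim x (upd lam j t) k = rim x lam k.
Proof.
  induction k as [|k IH]; intros Hk; cbn [rim]; [reflexivity|].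
  unfold upd at 1 2.
  replace (Nat.eqb (S k) j) with false by (symmetry; apply Nat.eqb_neq; lia).
  rewrite IH by lia; reflexivity.
Qed.

Lemma rim_upd_eq (x lam : nat -> R) (k : nat) (t : R) :
  rim x (upd lam (S k) t) (S k) = (1 - t) * x (S k) + t * rim x lam k.
Proof.
  cbn [rim]; unfold upd at 1 2; rewrite Nat.eqb_refl, rim_upd_lt by lia.
  reflexivity.
Qed.

Lemma rim_zero (x : nat -> R) (k : nat) : rim x zero_vec k = x k.
Proof.
  induction k as [|k IH]; cbn [rim]; [reflexivity|].
  rewrite IH; unfold zero_vec; ring.
Qed.

Lemma dpartial_rim_diag (x lam : nat -> R) (k : nat) :
  dpartial (S k) (fun l => rim x l (S k)) lam = rim x lam k - x (S k).
Proof.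
  unfold dpartial.
  rewrite (Derive_ext _ (fun t => (1 - t) * x (S k) + t * rim x lam k))
    by (intros; apply rim_upd_eq).
  apply is_derive_unique; auto_derive; [exact I | ring].
Qed.

Lemma Amat_diag (x : nat -> R) (k : nat) : Amat x (S k) (S k) = x k - x (S k).
Proof. unfold Amat; rewrite dpartial_rim_diag, rim_zero; reflexivity. Qed.

Lemma Bmat_diag (x : nat -> R) (k : nat) :
  Bmat x (S k) (S (S k)) (S (S k)) = x k - x (S k).
Proof.
  unfold Bmat, dpartial at 1.
  rewrite (Derive_ext _ (fun t => (1 - t) * x (S k) + t * x k - x (S (S k)))).
  - apply is_derive_unique; auto_derive; [exact I | ring].
  - intros t; rewrite dpartial_rim_diag, rim_upd_eq, rim_zero; reflexivity.
Qed.

Definition variation (x : nat -> R) (n : nat) : R :=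
  rsum1 (fun k => Rabs (x (pred k) - x k)) n.

Lemma variation_nonneg (x : nat -> R) (n : nat) : 0 <= variation x n.
Proof. apply rsum1_nonneg; intros; apply Rabs_pos. Qed.

Lemma variation_monotone (x : nat -> R) (m n : nat) :
  (m <= n)%nat -> variation x m <= variation x n.
Proof. apply rsum1_monotone; intros; apply Rabs_pos. Qed.

Lemma rim_dist_le_variation (x lam : nat -> R) (r : nat) :
  (forall j, (1 <= j <= r)%nat -> 0 <= lam j <= 1) ->
  Rabs (rim x lam r - x r) <= variation x r.
Proof.
  induction r as [|r IH]; intros Hlam; cbn [rim].
  - unfold Rminus; rewrite Rplus_opp_r, Rabs_R0; apply variation_nonneg.
  - assert (Herr : Rabs (rim x lam r - x r) <= variation x r)
      by (apply IH; intros j Hj; apply Hlam; lia).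
    destruct (Hlam (S r) ltac:(lia)) as [Hl0 Hl1].
    replace ((1 - lam (S r)) * x (S r) + lam (S r) * rim x lam r - x (S r))
      with (lam (S r) * ((rim x lam r - x r) + (x r - x (S r)))) by ring.
    rewrite Rabs_mult, (Rabs_pos_eq (lam (S r))) by exact Hl0.
    pose proof (Rabs_triang (rim x lam r - x r) (x r - x (S r))).
    pose proof (Rabs_pos (rim x lam r - x r + (x r - x (S r)))).
    unfold variation; cbn [rsum1 pred]; fold (variation x r).
    nra.
Qed.

Lemma variation_le_frob (x : nat -> R) (d : nat) :
  variation x d <= frob d (Amat x) + rsum1 (fun i => frob d (Bmat x i)) d.
Proof.
  assert (HB0 : forall i, 0 <= frob d (Bmat x i)) by (intros; apply sqrt_pos).
  destruct d as [|m].
  - assert (0 <= frob 0 (Amat x)) by apply sqrt_pos.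
    unfold variation; cbn [rsum1]; lra.
  - unfold variation; cbn [rsum1 pred]; fold (variation x m).
    assert (HA : Rabs (x m - x (S m)) <= frob (S m) (Amat x))
      by (rewrite <- Amat_diag; apply Rabs_le_frob; lia).
    assert (HB : variation x m <= rsum1 (fun i => frob (S m) (Bmat x i)) m).
    { apply rsum1_le; intros [|k] Hk; [lia|].
      cbn [pred]; rewrite <- Bmat_diag; apply Rabs_le_frob; lia. }
    pose proof (rsum1_monotone _ m (S m) HB0 ltac:(lia)).
    cbn [rsum1] in *; lra.
Qed.

Lemma Rabs_dot_rim_sub_le (d : nat) (w x lam : nat -> R) :
  (forall j, (1 <= j <= d)%nat -> 0 <= lam j <= 1) ->
  Rabs (dot d w (rim x lam) - dot d w x)
  <= variation x d * rsum1 (fun i => Rabs (w i)) d.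
Proof.
  intros Hlam; unfold dot, rsum0; cbn [rim].
  replace (w O * x O + rsum1 (fun i => w i * rim x lam i) d
           - (w O * x O + rsum1 (fun i => w i * x i) d))
    with (rsum1 (fun i => w i * rim x lam i) d - rsum1 (fun i => w i * x i) d)
    by ring.
  rewrite rsum1_minus, Rmult_comm, <- rsum1_mult_r.
  eapply Rle_trans; [apply Rabs_rsum1_le|].
  apply rsum1_le; intros k Hk.
  replace (w k * rim x lam k - w k * x k) with (w k * (rim x lam k - x k)) by ring.
  rewrite Rabs_mult; apply Rmult_le_compat_l; [apply Rabs_pos|].
  apply Rle_trans with (variation x k).
  - apply rim_dist_le_variation; intros j Hj; apply Hlam; lia.
  - apply variation_monotone; lia.
Qed.

Theorem theorem3 (d : nat) (x : nat -> R) (y : R) (lam : nat -> R)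
  (w : nat -> R) (b : R) (g : (nat -> R) -> R) :
  (y = 0 \/ y = 1) ->
  (forall j : nat, (1 <= j <= d)%nat -> 0 <= lam j < 1) ->
  (forall z : nat -> R, g z = dot d w z + b) ->
  Rabs (loss g (rim x lam) y - loss g x y)
  <= sqrt (INR d) * (frob d (Amat x) + rsum1 (fun i => frob d (Bmat x i)) d)
     * euclid d w.
Proof.
  intros Hy Hlam Hg; unfold loss; rewrite !Hg.
  eapply Rle_trans; [apply bce_lipschitz, Hy|].
  replace (dot d w (rim x lam) + b - (dot d w x + b))
    with (dot d w (rim x lam) - dot d w x) by ring.
  eapply Rle_trans.
  { apply Rabs_dot_rim_sub_le; intros j Hj; specialize (Hlam j Hj); lra. }
  pose proof (variation_nonneg x d).
  pose proof (variation_le_frob x d).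
  pose proof (rsum1_abs_le_euclid w d).
  pose proof (rsum1_nonneg (fun i => Rabs (w i)) d (fun i => Rabs_pos (w i))).
  pose proof (sqrt_pos (INR d)).
  assert (0 <= euclid d w) by apply sqrt_pos.
  nra.
Qed.
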